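(* The orthomodular lattice MG1 does not admit a strong set of states. More precisely, every state $m$ on MG1 with $m(v)=1$ satisfies $m(u')=1$, although $v\not\le u'$.
   Context: MG1 is the orthomodular lattice given by the following Greechie diagram: that is, the unique (up to isomorphism) orthomodular lattice whose atoms are the listed atoms and whose blocks (maximal Boolean subalgebras) correspond to the listed blocks. In each block, the listed atoms are mutually orthogonal and their join is $1$. The diagram has no loops of order $3$ or $4$. The 19 atoms are $v,e_1,e_2,e_3,a_1,a_2,a_3,b_1,b_2,b_3,c_1,c_2,c_3,d_1,d_2,d_3,f_1,f_2,u$. The 11 blocks (each with three atoms) are: $\{v,e_1,a_1\}$, $\{v,e_2,a_2\}$, $\{v,e_3,a_3\}$, $\{a_1,b_1,c_1\}$, $\{a_2,b_2,c_2\}$, $\{a_3,b_3,c_3\}$, $\{b_1,b_2,b_3\}$, $\{c_1,f_1,d_1\}$, $\{c_2,f_2,d_2\}$, $\{c_3,u,d_3\}$, $\{d_1,d_2,d_3\}$. A state on an ortholattice $L$ is a map $m:L\to[0,1]$ with $m(1)=1$ and $a\le b'\Rightarrow m(a\cup b)=m(a)+m(b)$. $L$ admits a strong set of states if there is a nonempty set $S$ of states such that for all $a,b\in L$ with $a\not\le b$ some $m\in S$ has $m(a)=1$ and $m(b)\ne1$. *)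

From Stdlib Require Import Reals List.
Import ListNotations.
Open Scope R_scope.

Inductive atom : Type :=
  | v | e1 | e2 | e3 | a1 | a2 | a3 | b1 | b2 | b3
  | c1 | c2 | c3 | d1 | d2 | d3 | f1 | f2 | u.

(* The 11 blocks (three mutually orthogonal atoms, joining to 1). *)
Definition blocks : list (atom * atom * atom) :=
  [ (v, e1, a1); (v, e2, a2); (v, e3, a3);
    (a1, b1, c1); (a2, b2, c2); (a3, b3, c3);
    (b1, b2, b3);
    (c1, f1, d1); (c2, f2, d2); (c3, u, d3);
    (d1, d2, d3) ].

Definition in_block (x : atom) (blk : atom * atom * atom) : Prop :=
  match blk with (p, q, r) => x = p \/ x = q \/ x = r end.

Definition orth (x y : atom) : Prop :=
  x <> y /\ exists blk, In blk blocks /\ in_block x blk /\ in_block y blk.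

(* Elements of MG1: since every block has 3 atoms, the lattice consists of
   0, 1, the atoms x and their orthocomplements x' (the coatoms). *)
Inductive MG1 : Type :=
  | Zero : MG1
  | One : MG1
  | At : atom -> MG1
  | Co : atom -> MG1.

Definition compl (a : MG1) : MG1 :=
  match a with
  | Zero => One
  | One => Zero
  | At x => Co x
  | Co x => At x
  end.

Definition le (a b : MG1) : Prop :=
  match a, b with
  | Zero, _ => True
  | _, One => True
  | At x, At y => x = y
  | At x, Co y => orth x y
  | Co x, Co y => x = y
  | _, _ => False
  end.

Definition is_join (a b c : MG1) : Prop :=
  le a c /\ le b c /\ forall d, le a d -> le b d -> le c d.

Definition is_state (m : MG1 -> R) : Prop :=
  (forall a, 0 <= m a <= 1) /\
  m One = 1 /\
  (forall a b c, le a (compl b) -> is_join a b c -> m c = m a + m b).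

Definition admits_strong_set_of_states : Prop :=
  exists S : (MG1 -> R) -> Prop,
    (exists m, S m) /\
    (forall m, S m -> is_state m) /\
    (forall a b, ~ le a b -> exists m, S m /\ m a = 1 /\ m b <> 1).

From Pilot Require Import Defs.
From Stdlib Require Import Reals Lra List Bool.
Import ListNotations.
Open Scope R_scope.

(* A state is additive on each block: if (x, y, z) is a block,
   the join of the orthogonal atoms x and y is the coatom z' (any coatom
   w' above x and y must have w = z), so m(x) + m(y) = m(z') = 1 - m(z),
   i.e. m(x) + m(y) + m(z) = 1.
   Let m(v) = 1.  The blocks through v force m(e_i) = m(a_i) = 0, hence
   m(b_i) + m(c_i) = 1; since m(b_1) + m(b_2) + m(b_3) = 1 we get
   m(c_1) + m(c_2) + m(c_3) = 2.  Summing the blocks {c_i, -, d_i} and using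
   m(d_1) + m(d_2) + m(d_3) = 1 gives m(f_1) + m(f_2) + m(u) = 0, so m(u) = 0
   and m(u') = 1.  As v is not below u' (v and u share no block), no set of
   states separates v from u', so MG1 has no strong set of states. *)

(* Boolean decision of orthogonality, so that finite facts about the Greechie
   diagram can be checked by evaluation. *)
Definition atom_dec (x y : atom) : {x = y} + {x <> y}.
Proof. decide equality. Defined.

Definition atom_eqb (x y : atom) : bool := if atom_dec x y then true else false.

Lemma atom_eqb_spec (x y : atom) : atom_eqb x y = true <-> x = y.
Proof. unfold atom_eqb; destruct (atom_dec x y); split; congruence. Qed.

Definition in_blockb (x : atom) (blk : atom * atom * atom) : bool :=
  let '(p, q, r) := blk in atom_eqb x p || atom_eqb x q || atom_eqb x r.

Lemma in_blockb_spec (x : atom) (blk : atom * atom * atom) :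
  in_blockb x blk = true <-> in_block x blk.
Proof.
  destruct blk as [[p q] r]; simpl.
  rewrite !orb_true_iff, !atom_eqb_spec; tauto.
Qed.

Definition orthb (x y : atom) : bool :=
  negb (atom_eqb x y) && existsb (fun blk => in_blockb x blk && in_blockb y blk) blocks.

Lemma orthb_spec (x y : atom) : orthb x y = true <-> orth x y.
Proof.
  unfold orthb, orth.
  rewrite andb_true_iff, negb_true_iff, existsb_exists.
  setoid_rewrite andb_true_iff; setoid_rewrite in_blockb_spec.
  split.
  - intros [Hne Hblk]; split; [|exact Hblk].
    intro E; apply atom_eqb_spec in E; congruence.
  - intros [Hne Hblk]; split; [|exact Hblk].
    destruct (atom_eqb x y) eqn:E; [apply atom_eqb_spec in E; congruence | reflexivity].
Qed.

Lemma block_orth (x y z : atom) :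
  In (x, y, z) blocks -> orth x y /\ orth x z /\ orth y z.
Proof.
  intro Hin; rewrite <- !orthb_spec.
  cbn in Hin; repeat destruct Hin as [Hin | Hin];
    try (injection Hin as <- <- <-; auto); contradiction.
Qed.

(* Two atoms of a block have only one common orthogonal atom, the third atom
   of the block: the Greechie diagram has no two blocks sharing two atoms. *)
Lemma block_common_orth (x y z w : atom) :
  In (x, y, z) blocks -> orth x w -> orth y w -> w = z.
Proof.
  intros Hin Hx Hy; apply orthb_spec in Hx, Hy.
  cbn in Hin; repeat destruct Hin as [Hin | Hin];
    try (injection Hin as <- <- <-; destruct w; vm_compute in Hx, Hy; congruence);
    contradiction.
Qed.

Lemma orth_irrefl (x : atom) : ~ orth x x.
Proof. intros [Hne _]; exact (Hne eq_refl). Qed.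

Lemma atom_compl_join (x : atom) : is_join (At x) (Co x) One.
Proof.
  split; [exact I | split; [exact I |]].
  intros [| | w | w] Hx Hco; simpl in *; try tauto.
  subst w; exact (orth_irrefl x Hx).
Qed.

Lemma block_join (x y z : atom) :
  In (x, y, z) blocks -> is_join (At x) (At y) (Co z).
Proof.
  intro Hin; destruct (block_orth x y z Hin) as [Hxy [Hxz Hyz]].
  split; [exact Hxz | split; [exact Hyz |]].
  intros [| | w | w] Hx Hy; simpl in *; try tauto.
  - subst; exact (orth_irrefl w Hxy).
  - symmetry; exact (block_common_orth x y z w Hin Hx Hy).
Qed.

Section States.

Variable m : MG1 -> R.
Hypothesis m_state : is_state m.

Lemma state_nonneg (a : MG1) : 0 <= m a.
Proof. destruct m_state as [Hrange _]; apply Hrange. Qed.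

Lemma state_atom_compl (x : atom) : m (At x) + m (Co x) = 1.
Proof.
  destruct m_state as [_ [Hone Hadd]].
  rewrite <- Hone; symmetry.
  apply Hadd; [reflexivity | apply atom_compl_join].
Qed.

Lemma state_block_sum (x y z : atom) :
  In (x, y, z) blocks -> m (At x) + m (At y) + m (At z) = 1.
Proof.
  intro Hin; destruct m_state as [_ [_ Hadd]].
  assert (Hjoin : m (Co z) = m (At x) + m (At y)).
  { apply Hadd; [apply (block_orth x y z Hin) | apply block_join, Hin]. }
  pose proof (state_atom_compl z); lra.
Qed.

Lemma state_v_forces_u_compl : m (At v) = 1 -> m (Co u) = 1.
Proof.
  intro Hv.
  pose proof (state_nonneg (At e1)); pose proof (state_nonneg (At e2)).
  pose proof (state_nonneg (At e3)); pose proof (state_nonneg (At a1)).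
  pose proof (state_nonneg (At a2)); pose proof (state_nonneg (At a3)).
  pose proof (state_nonneg (At f1)); pose proof (state_nonneg (At f2)).
  pose proof (state_nonneg (At u)).
  assert (Hv1 := state_block_sum v e1 a1 ltac:(cbn; tauto)).
  assert (Hv2 := state_block_sum v e2 a2 ltac:(cbn; tauto)).
  assert (Hv3 := state_block_sum v e3 a3 ltac:(cbn; tauto)).
  assert (Ha1 := state_block_sum a1 b1 Defs.c1 ltac:(cbn; tauto)).
  assert (Ha2 := state_block_sum a2 b2 c2 ltac:(cbn; tauto)).
  assert (Ha3 := state_block_sum a3 b3 c3 ltac:(cbn; tauto)).
  assert (Hb := state_block_sum b1 b2 b3 ltac:(cbn; tauto)).
  assert (Hc1 := state_block_sum Defs.c1 f1 Defs.d1 ltac:(cbn; tauto)).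
  assert (Hc2 := state_block_sum c2 f2 Defs.d2 ltac:(cbn; tauto)).
  assert (Hc3 := state_block_sum c3 u d3 ltac:(cbn; tauto)).
  assert (Hd := state_block_sum Defs.d1 Defs.d2 d3 ltac:(cbn; tauto)).
  assert (Ha_zero : m (At a1) = 0 /\ m (At a2) = 0 /\ m (At a3) = 0) by lra.
  assert (Hc_sum : m (At Defs.c1) + m (At c2) + m (At c3) = 2) by lra.
  assert (Hf_sum : m (At f1) + m (At f2) + m (At u) = 0) by lra.
  assert (Hu : m (At u) = 0) by lra.
  pose proof (state_atom_compl u); lra.
Qed.

End States.

Lemma v_not_le_u_compl : ~ le (At v) (Co u).
Proof. simpl; rewrite <- orthb_spec; vm_compute; discriminate. Qed.

Lemma no_strong_set_of_states (a b : MG1) :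
  ~ le a b -> (forall m, is_state m -> m a = 1 -> m b = 1) ->
  ~ admits_strong_set_of_states.
Proof.
  intros Hab Hforce [S [_ [HS Hsep]]].
  destruct (Hsep a b Hab) as [m [Sm [Ha Hb]]].
  exact (Hb (Hforce m (HS m Sm) Ha)).
Qed.

Theorem theorem6p6 :
  ~ admits_strong_set_of_states /\
  (forall m : MG1 -> R, is_state m -> m (At v) = 1 -> m (Co u) = 1) /\
  ~ le (At v) (Co u).
Proof.
  split; [| split].
  - exact (no_strong_set_of_states _ _ v_not_le_u_compl state_v_forces_u_compl).
  - exact state_v_forces_u_compl.
  - exact v_not_le_u_compl.
Qed.
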